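(* There exist a finite-dimensional inner product vector space $(E,g)$ over $k$ ($k=\mathbb R$ or $\mathbb C$), an endomorphism $f\in\operatorname{End}_k(E)$ and $f$-invariant subspaces $H_1,\dots,H_n$ with $E=H_1\oplus\dots\oplus H_n$ such that $\widetilde{\mathcal H}_f^\perp\ne[\operatorname{Ker} f]^\perp$ and $\mathcal H_f^\perp\ne[\operatorname{Im} f]^\perp$.
   Context: Write $f_i=f|_{H_i}$. For a subspace $W\subseteq H_i$, $[W]_i^\perp=\{v\in H_i:g(w,v)=0\ \forall w\in W\}$; for a subspace $U\subseteq E$, $U^\perp$ is its orthogonal complement in $E$. Set $\mathcal H_f^\perp=[\operatorname{Im} f_1]_1^\perp\oplus\dots\oplus[\operatorname{Im} f_n]_n^\perp$ and $\widetilde{\mathcal H}_f^\perp=[\operatorname{Ker} f_1]_1^\perp\oplus\dots\oplus[\operatorname{Ker} f_n]_n^\perp$. *)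

From HB Require Import structures.
From mathcomp Require Import all_boot all_order all_algebra.
From mathcomp Require Import complex.
Set Implicit Arguments. Unset Strict Implicit. Unset Printing Implicit Defensive.
Import Order.TTheory GRing.Theory Num.Theory.
Local Open Scope ring_scope.

(* The finite-dimensional space E is modelled as 'rV[K]_m (every finite-dim
   K-vector space is of this form); subspaces are {vspace 'rV[K]_m}
   and endomorphisms are 'End('rV[K]_m). *)
Notation vec K m := 'rV[K]_m.

(* g is an inner product w.r.t. the conjugation cj (cj = id for k = R,
   cj = complex conjugation for k = C): linear in the second argument,
   (conjugate-)symmetric, positive definite. *)
Definition is_inner_product (K : numFieldType) (cj : K -> K) (m : nat)
  (g : vec K m -> vec K m -> K) : Prop :=
  [/\ forall (a : K) (u v w : vec K m), g u (a *: v + w) = a * g u v + g u w,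
      forall u v : vec K m, g u v = cj (g v u)
    & forall v : vec K m, v != 0 -> 0 < g v v].

Definition orth_in (K : numFieldType) (m : nat) (g : vec K m -> vec K m -> K)
  (H W : {vspace vec K m}) : vec K m -> Prop :=
  fun v => v \in H /\ forall w, w \in W -> g w v = 0.

Definition orth (K : numFieldType) (m : nat) (g : vec K m -> vec K m -> K)
  (U : {vspace vec K m}) : vec K m -> Prop :=
  fun v => forall w, w \in U -> g w v = 0.

Definition sum_sets (K : numFieldType) (m n : nat)
  (S : 'I_n -> vec K m -> Prop) : vec K m -> Prop :=
  fun v => exists vs : 'I_n -> vec K m, (forall i, S i (vs i)) /\ v = \sum_i vs i.

(* restriction f_i = f|_{H_i}: Ker f_i = Ker f ∩ H_i, Im f_i = f(H_i) *)
Definition ker_restr (K : fieldType) (m : nat) (f : 'End(vec K m))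
  (H : {vspace vec K m}) : {vspace vec K m} := (lker f :&: H)%VS.
Definition im_restr (K : fieldType) (m : nat) (f : 'End(vec K m))
  (H : {vspace vec K m}) : {vspace vec K m} := (f @: H)%VS.

Definition Hf_perp (K : numFieldType) (m n : nat) (g : vec K m -> vec K m -> K)
  (f : 'End(vec K m)) (H : 'I_n -> {vspace vec K m}) : vec K m -> Prop :=
  sum_sets (fun i => orth_in g (H i) (im_restr f (H i))).
Definition Hf_tilde_perp (K : numFieldType) (m n : nat) (g : vec K m -> vec K m -> K)
  (f : 'End(vec K m)) (H : 'I_n -> {vspace vec K m}) : vec K m -> Prop :=
  sum_sets (fun i => orth_in g (H i) (ker_restr f (H i))).

Definition same_set (T : Type) (A B : T -> Prop) : Prop := forall x, A x <-> B x.

Definition lemma3p4_over (K : numFieldType) (cj : K -> K) : Prop :=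
  exists (m n : nat) (g : vec K m -> vec K m -> K) (f : 'End(vec K m))
         (H : 'I_n -> {vspace vec K m}),
    [/\ is_inner_product cj g,
        (forall i, (f @: H i <= H i)%VS),
        (\sum_i H i)%VS = fullv,
        directv (\sum_i H i)
      & (~ same_set (Hf_tilde_perp g f H) (orth g (lker f))
         /\ ~ same_set (Hf_perp g f H) (orth g (limg f)))].

From HB Require Import structures.
From mathcomp Require Import all_boot all_order all_algebra.
From mathcomp Require Import complex reals.
Set Implicit Arguments. Unset Strict Implicit. Unset Printing Implicit Defensive.
Import Order.TTheory GRing.Theory Num.Theory.
Local Open Scope ring_scope.

(* Take E = k^2 with the standard inner product, H_1 the line through e_0,
   H_2 the line through u = e_0 + e_1, and f the projection onto H_1 along
   H_2.  On each H_i the map f is either the identity or zero, so every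
   [Ker f_i]_i^perp and [Im f_i]_i^perp is 0 or all of H_i, and the two sums
   are H_1 and H_2.  The global complements [Ker f]^perp = H_2^perp and
   [Im f]^perp = H_1^perp differ from them because H_1 and H_2 are not
   orthogonal: g(e_0, u) = 1. *)

Lemma sum_sets_single (K : numFieldType) (m n : nat) (S : 'I_n -> vec K m -> Prop)
    (i : 'I_n) (v : vec K m) :
  (forall j, S j 0) -> S i v -> sum_sets S v.
Proof.
move=> S0 Siv; exists (fun j => if j == i then v else 0); split.
  by move=> j; case: eqP => [->|].
by rewrite (bigD1 i) //= eqxx big1 ?addr0 // => j /negbTE ->.
Qed.

Lemma big_ord2 (R : Type) (idx : R) (op : Monoid.law idx) (F : 'I_2 -> R) :
  \big[op/idx]_(i < 2) F i = op (F 0) (F 1).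
Proof. by rewrite big_ord_recl big_ord1; congr (op _ (F _)); apply: val_inj. Qed.

Section InnerProduct.
Variables (K : numFieldType) (cj : K -> K) (m : nat) (g : vec K m -> vec K m -> K).
Hypothesis g_inner : is_inner_product cj g.

Lemma inner_prod0r (w : vec K m) : g w 0 = 0.
Proof.
case: g_inner => g_linear _ _.
have := g_linear 1 w 0 0; rewrite scale1r addr0 mul1r -{1}[g w 0]addr0.
by move/addrI.
Qed.

Lemma orth_in0 (H W : {vspace vec K m}) : orth_in g H W 0.
Proof. by split=> [|w _]; rewrite ?mem0v ?inner_prod0r. Qed.

End InnerProduct.

Section StandardInnerProduct.
Variables (K : numFieldType) (cj : {rmorphism K -> K}).
Hypotheses (cjK : involutive cj) (cj_mul_gt0 : forall x : K, x != 0 -> 0 < cj x * x).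

Definition std_inner {m : nat} (u v : vec K m) : K := \sum_j cj (u 0 j) * v 0 j.

Lemma std_inner0l m (v : vec K m) : std_inner 0 v = 0.
Proof. by rewrite /std_inner big1 // => j _; rewrite mxE rmorph0 mul0r. Qed.

Lemma std_inner_deltal m (i : 'I_m) (v : vec K m) : std_inner (delta_mx 0 i) v = v 0 i.
Proof.
rewrite /std_inner (bigD1 i) //= big1 => [|j /negbTE ji]; last first.
  by rewrite mxE ji andbF rmorph0 mul0r.
by rewrite mxE !eqxx rmorph1 mul1r addr0.
Qed.

Lemma std_inner_is_inner_product m : is_inner_product cj (@std_inner m).
Proof.
split=> [a u v w | u v | v v_neq0].
- rewrite /std_inner mulr_sumr -big_split; apply: eq_bigr => j _.
  by rewrite !mxE mulrDr mulrCA.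
- rewrite /std_inner rmorph_sum; apply: eq_bigr => j _.
  by rewrite rmorphM cjK mulrC.
- have [j vj_neq0] : exists j, v 0 j != 0.
    apply/existsP; apply: contraR v_neq0 => /existsPn v0.
    by apply/eqP/rowP => j; rewrite mxE; apply/eqP; rewrite -[_ == _]negbK v0.
  rewrite /std_inner (bigD1 j) //=.
  apply: ltr_pwDl (cj_mul_gt0 vj_neq0) _; apply: sumr_ge0 => k _.
  have [->|vk_neq0] := eqVneq (v 0 k) 0; first by rewrite rmorph0 mul0r.
  exact/ltW/cj_mul_gt0.
Qed.

End StandardInnerProduct.

Section ProjectionExample.
Variables (K : numFieldType) (cj : {rmorphism K -> K}).
Hypotheses (cjK : involutive cj) (cj_mul_gt0 : forall x : K, x != 0 -> 0 < cj x * x).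

Local Notation g := (@std_inner K cj 2).
Let g_inner := std_inner_is_inner_product cjK cj_mul_gt0 2.

Definition e12 : vec K 2 := 'e_0 + 'e_1.

Definition proj_mx : 'M[K]_2 := delta_mx 0 0 - delta_mx 1 0.
Definition proj : 'End(vec K 2) := linfun (mulmxr proj_mx).

Definition lines (i : 'I_2) := if i == 0 then vline 'e_0 else vline e12.

Lemma proj_e0 : proj 'e_0 = 'e_0.
Proof. by rewrite lfunE /= mulmxBr mul_delta_mx mul_delta_mx_0 ?subr0. Qed.

Lemma proj_e1 : proj 'e_1 = - 'e_0.
Proof. by rewrite lfunE /= mulmxBr mul_delta_mx mul_delta_mx_0 ?sub0r. Qed.

Lemma proj_e12 : proj e12 = 0.
Proof. by rewrite linearD /= proj_e0 proj_e1 subrr. Qed.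

Lemma std_inner_e0_e12 : g 'e_0 e12 = 1.
Proof. by rewrite std_inner_deltal !mxE /= addr0. Qed.

Lemma std_inner_e12_e0 : g e12 'e_0 = 1.
Proof.
case: g_inner => _ g_sym _.
by rewrite g_sym std_inner_e0_e12 rmorph1.
Qed.

Lemma lines_sum : (\sum_i lines i)%VS = fullv.
Proof.
apply/eqP; rewrite eqEsubv subvf; apply/subvP => v _.
have -> : v = (v 0 0 - v 0 1) *: 'e_0 + v 0 1 *: e12.
  by rewrite scalerDr addrA -scalerDl subrK {1}[v]row_sum_delta big_ord2.
by rewrite big_ord2 memv_add ?memvZ ?memv_line.
Qed.

Lemma lines_direct : directv (\sum_i lines i).
Proof.
rewrite directvEgeq /= lines_sum dimvf /= dim_matrix big_ord2 /=.
by rewrite /lines !dim_vline; case: (_ != 0); case: (_ != 0).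
Qed.

Lemma proj_lines_stable i : (proj @: lines i <= lines i)%VS.
Proof. by rewrite /lines; case: eqP => _; rewrite limg_line ?proj_e0 ?proj_e12 ?sub0v. Qed.

Lemma ker_restr_proj_line0 : ker_restr proj (lines 0) = 0%VS.
Proof.
apply/eqP; rewrite -subv0; apply/subvP => w.
rewrite memv_cap memv_ker memv0 => /andP[proj_w /vlineP[c w_def]].
by move: proj_w; rewrite w_def linearZ /= proj_e0.
Qed.

Lemma im_restr_proj_line1 : im_restr proj (lines 1) = 0%VS.
Proof. by rewrite /im_restr /lines /= limg_line proj_e12. Qed.

Lemma e0_in_Hf_tilde_perp : Hf_tilde_perp g proj lines 'e_0.
Proof.
apply: (sum_sets_single (i := 0)) => [j|]; first exact: orth_in0 g_inner _ _.
rewrite /orth_in ker_restr_proj_line0; split=> [|w]; first exact: memv_line.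
by rewrite memv0 => /eqP ->; apply: std_inner0l.
Qed.

Lemma e12_in_Hf_perp : Hf_perp g proj lines e12.
Proof.
apply: (sum_sets_single (i := 1)) => [j|]; first exact: orth_in0 g_inner _ _.
rewrite /orth_in im_restr_proj_line1; split=> [|w]; first exact: memv_line.
by rewrite memv0 => /eqP ->; apply: std_inner0l.
Qed.

Lemma e0_notin_orth_ker : ~ orth g (lker proj) 'e_0.
Proof.
move=> /(_ e12); rewrite memv_ker proj_e12 eqxx std_inner_e12_e0 => /(_ isT) /eqP.
by rewrite oner_eq0.
Qed.

Lemma e12_notin_orth_im : ~ orth g (limg proj) e12.
Proof.
move=> /(_ 'e_0); rewrite -{1}proj_e0 memv_img ?memvf // std_inner_e0_e12.
by move=> /(_ isT) /eqP; rewrite oner_eq0.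
Qed.

Lemma lemma3p4_over_proj : lemma3p4_over cj.
Proof.
exists 2%N, 2%N, g, proj, lines; split.
- exact: g_inner.
- exact: proj_lines_stable.
- exact: lines_sum.
- exact: lines_direct.
- split=> [/(_ 'e_0) [e0_in _] | /(_ e12) [e12_in _]].
    exact/e0_notin_orth_ker/e0_in/e0_in_Hf_tilde_perp.
  exact/e12_notin_orth_im/e12_in/e12_in_Hf_perp.
Qed.

End ProjectionExample.

Theorem lemma3p4 (R : realType) :
  lemma3p4_over (K := R) id /\ lemma3p4_over (K := R[i]) Num.conj.
Proof.
split.
- apply: (@lemma3p4_over_proj _ idfun) => // x x_neq0.
  by rewrite -expr2 exprn_even_gt0.
- apply: (@lemma3p4_over_proj _ Num.conj) => [|x x_neq0]; first exact: conjCK.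
  by rewrite mulrC mul_conjC_gt0.
Qed.
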